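(* Let $y\in(0,1]$ and $A_0>0$. For every $z=u+iv\in\mathbb G$, $$\Big|\Big(z+\frac{y-1}{z}\Big)^2-4y\Big|\ge\frac{4y}{5}\max\{\gamma(z),v\}\qquad\text{and}\qquad nv\sqrt{\Big|\Big(z+\frac{y-1}{z}\Big)^2-4y\Big|}\ge \frac{4y}{5}A_0 .$$
   Context: Region $\mathbb G$ (depending on $n$, $y$, $A_0$): $a=1-\sqrt y$, $b=1+\sqrt y$, $V=4\sqrt y$, $v_0=A_0/n$, $\kappa>0$ defined by $\frac1\pi\int_{|u|\le\kappa}\frac{du}{1+u^2}=\frac34$, $\varepsilon=(2v_0\kappa)^{2/3}$; for $z=u+iv$, $\gamma(z)=\min\{||u|-a|,|b-|u||\}$; $\mathbb G=\{z=u+iv: a+\varepsilon\le|u|\le b-\varepsilon,\ v_0/\sqrt{\gamma(z)}\le v\le V\}$. *)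

From Stdlib Require Import Reals Lra.
Open Scope R_scope.

Definition C := (R * R)%type.
Definition Cadd (z w : C) : C := (fst z + fst w, snd z + snd w).
Definition Csub (z w : C) : C := (fst z - fst w, snd z - snd w).
Definition Cmul (z w : C) : C :=
  (fst z * fst w - snd z * snd w, fst z * snd w + snd z * fst w).
Definition Cinv (z : C) : C :=
  (fst z / (fst z ^ 2 + snd z ^ 2), - snd z / (fst z ^ 2 + snd z ^ 2)).
Definition Cdiv (z w : C) : C := Cmul z (Cinv w).
Definition RtoC (x : R) : C := (x, 0).
Definition Cmod (z : C) : R := sqrt (fst z ^ 2 + snd z ^ 2).

Definition a_ (y : R) : R := 1 - sqrt y.
Definition b_ (y : R) : R := 1 + sqrt y.
Definition V_ (y : R) : R := 4 * sqrt y.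

Definition gamma_ (y u : R) : R :=
  Rmin (Rabs (Rabs u - a_ y)) (Rabs (b_ y - Rabs u)).

Definition Dz (y : R) (z : C) : C :=
  let w := Cadd z (Cdiv (RtoC (y - 1)) z) in
  Csub (Cmul w w) (RtoC (4 * y)).

Definition kappa_spec (kappa : R) : Prop :=
  0 < kappa /\
  exists pr : Riemann_integrable (fun u => / (1 + u ^ 2)) (- kappa) kappa,
    / PI * RiemannInt pr = 3 / 4.

Definition inG (n : nat) (y A0 kappa u v : R) : Prop :=
  let v0 := A0 / INR n in
  let eps := Rpower (2 * v0 * kappa) (2 / 3) in
  a_ y + eps <= Rabs u <= b_ y - eps /\
  v0 / sqrt (gamma_ y u) <= v <= V_ y.

(* With s = sqrt y, a = 1 - s and b = 1 + s one has
   (z + (y-1)/z)^2 - 4y = (z^2 - a^2)(z^2 - b^2) / z^2.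
   Writing t = |u|, the two "far" factors |t + a + iv|, |t + b + iv| dominate
   |z|, so |D| >= |t - a + iv| |t - b + iv|.  Both near factors are at least
   max(gamma, v), and since (t - a) + (b - t) = 2s one of them is at least s;
   hence |D| >= sqrt y * max(gamma, v) >= y * max(gamma, v).  In G,
   gamma >= eps > 0 and v sqrt gamma >= v0 = A0/n give the second bound. *)
From Pilot Require Import Defs.
From Stdlib Require Import Reals Lra.
Open Scope R_scope.

Lemma Cmod_sqr (z : Defs.C) : Cmod z ^ 2 = fst z ^ 2 + snd z ^ 2.
Proof. unfold Cmod; rewrite pow2_sqrt; simpl; nra. Qed.

(* |z^2 - c^2|^2 for z = u + iv; it depends on u only through u^2. *)
Definition sqr_dist_prod (c u v : R) : R := (u ^ 2 + c ^ 2 + v ^ 2) ^ 2 - 4 * c ^ 2 * u ^ 2.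

Lemma sqr_dist_prod_factor (c x v : R) :
  sqr_dist_prod c x v = ((x - c) ^ 2 + v ^ 2) * ((x + c) ^ 2 + v ^ 2).
Proof. unfold sqr_dist_prod; ring. Qed.

Lemma Cmod_Dz_sqr (s u v : R) : u ^ 2 + v ^ 2 <> 0 ->
  Cmod (Dz (s * s) (u, v)) ^ 2 * (u ^ 2 + v ^ 2) ^ 2 =
  sqr_dist_prod (1 - s) u v * sqr_dist_prod (1 + s) u v.
Proof.
  intros Hz; rewrite Cmod_sqr.
  unfold Dz, Cadd, Csub, Cmul, Cdiv, Cinv, RtoC, sqr_dist_prod; simpl.
  field; replace (u * u + v * v) with (u ^ 2 + v ^ 2) by ring; exact Hz.
Qed.

Lemma near_factors_ge (s p q v M : R) :
  0 <= p -> 0 <= q -> p + q = 2 * s -> 0 <= M ->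
  M ^ 2 <= p ^ 2 + v ^ 2 -> M ^ 2 <= q ^ 2 + v ^ 2 ->
  s ^ 2 * M ^ 2 <= (p ^ 2 + v ^ 2) * (q ^ 2 + v ^ 2).
Proof.
  intros Hp Hq Hpq HM HMp HMq.
  assert (HM2 : 0 <= M ^ 2) by nra.
  destruct (Rle_dec s p) as [Hsp | Hps].
  - assert (s ^ 2 <= p ^ 2 + v ^ 2) by nra; nra.
  - assert (s ^ 2 <= q ^ 2 + v ^ 2) by nra; nra.
Qed.

Lemma Cmod_Dz_sqr_ge_near (s u v : R) : 0 <= s <= 1 -> u ^ 2 + v ^ 2 <> 0 ->
  ((Rabs u - (1 - s)) ^ 2 + v ^ 2) * ((Rabs u - (1 + s)) ^ 2 + v ^ 2)
    <= Cmod (Dz (s * s) (u, v)) ^ 2.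
Proof.
  intros Hs Hz; set (t := Rabs u); set (d := u ^ 2 + v ^ 2).
  assert (Hut : u ^ 2 = t ^ 2) by (unfold t; rewrite pow2_abs; reflexivity).
  assert (Ht0 : 0 <= t) by apply Rabs_pos.
  assert (Hd : 0 < d) by (unfold d; nra).
  pose proof (Cmod_Dz_sqr s u v Hz) as Hfac; fold d in Hfac.
  unfold sqr_dist_prod in Hfac; rewrite Hut in Hfac;
    fold (sqr_dist_prod (1 - s) t v) (sqr_dist_prod (1 + s) t v) in Hfac.
  rewrite !sqr_dist_prod_factor in Hfac.
  set (P := (t - (1 - s)) ^ 2 + v ^ 2) in *; set (Q := (t - (1 + s)) ^ 2 + v ^ 2) in *.
  assert (Hfar : d * d <= ((t + (1 - s)) ^ 2 + v ^ 2) * ((t + (1 + s)) ^ 2 + v ^ 2))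
    by (apply Rmult_le_compat; unfold d; nra).
  apply Rmult_le_reg_r with (d ^ 2); [nra |].
  rewrite Hfac.
  replace (P * ((t + (1 - s)) ^ 2 + v ^ 2) * (Q * ((t + (1 + s)) ^ 2 + v ^ 2)))
    with (P * Q * (((t + (1 - s)) ^ 2 + v ^ 2) * ((t + (1 + s)) ^ 2 + v ^ 2))) by ring.
  replace (d ^ 2) with (d * d) by ring.
  apply Rmult_le_compat_l; [| exact Hfar].
  apply Rmult_le_pos; apply Rplus_le_le_0_compat; apply pow2_ge_0.
Qed.

Lemma Cmod_Dz_ge (y u v : R) : 0 < y -> y <= 1 -> 0 < v ->
  a_ y < Rabs u < b_ y ->
  sqrt y * Rmax (gamma_ y u) v <= Cmod (Dz y (u, v)).
Proof.
  intros Hy0 Hy1 Hv Hu.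
  assert (Hs : 0 <= sqrt y <= 1).
  { split; [apply sqrt_pos | rewrite <- sqrt_1; apply sqrt_le_1_alt; lra]. }
  assert (Hnear := Cmod_Dz_sqr_ge_near (sqrt y) u v Hs ltac:(nra)).
  rewrite sqrt_sqrt in Hnear by lra.
  unfold gamma_, a_, b_ in *.
  set (s := sqrt y) in *; set (t := Rabs u) in *.
  rewrite (Rabs_right (t - (1 - s))), (Rabs_right (1 + s - t)) by lra.
  set (M := Rmax (Rmin (t - (1 - s)) (1 + s - t)) v).
  assert (HM0 : 0 <= M) by (unfold M; apply Rle_trans with v; [lra | apply Rmax_r]).
  assert (HsM : s ^ 2 * M ^ 2 <=
            ((t - (1 - s)) ^ 2 + v ^ 2) * ((1 + s - t) ^ 2 + v ^ 2)).
  { apply near_factors_ge; try lra;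
      unfold M, Rmax, Rmin; destruct (Rle_dec (t - (1 - s)) (1 + s - t)),
        (Rle_dec _ v); nra. }
  replace ((1 + s - t) ^ 2) with ((t - (1 + s)) ^ 2) in HsM by ring.
  rewrite <- (sqrt_pow2 (s * M)), <- (sqrt_pow2 (Cmod _)) by (try apply sqrt_pos; nra).
  apply sqrt_le_1_alt; nra.
Qed.

(* Stdlib's [Rpower x e] is [exp (e * ln x)]: positive for every [x]. *)
Lemma Rpower_gt0 (x e : R) : 0 < Rpower x e.
Proof. apply exp_pos. Qed.

Lemma le_sqrt_self (y : R) : 0 <= y <= 1 -> y <= sqrt y.
Proof.
  intros Hy; rewrite <- (sqrt_pow2 y) at 1 by lra.
  apply sqrt_le_1_alt; nra.
Qed.

Lemma gamma_ge (y u eps : R) :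
  a_ y + eps <= Rabs u <= b_ y - eps -> eps <= gamma_ y u.
Proof.
  intros Hu; unfold gamma_; apply Rmin_glb.
  - apply Rle_trans with (Rabs u - a_ y); [lra | apply Rle_abs].
  - apply Rle_trans with (b_ y - Rabs u); [lra | apply Rle_abs].
Qed.

Theorem mainTheorem13 (n : nat) (y A0 kappa : R)
  (hn : (0 < n)%nat) (hy0 : 0 < y) (hy1 : y <= 1) (hA0 : 0 < A0)
  (hkappa : kappa_spec kappa) :
  forall u v : R, inG n y A0 kappa u v ->
    4 * y / 5 * Rmax (gamma_ y u) v <= Cmod (Dz y (u, v)) /\
    4 * y / 5 * A0 <= INR n * v * sqrt (Cmod (Dz y (u, v))).
Proof.
  intros u v [Hu [Hv0 _]].
  set (v0 := A0 / INR n) in *; set (g := gamma_ y u) in *.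
  pose proof (Rpower_gt0 (2 * v0 * kappa) (2 / 3)) as Heps.
  assert (Hn : 0 < INR n) by (apply lt_0_INR; exact hn).
  assert (Hnv0 : INR n * v0 = A0) by (unfold v0; field; lra).
  assert (Hg : 0 < g) by (eapply Rlt_le_trans; [exact Heps | apply gamma_ge, Hu]).
  assert (Hsg : 0 < sqrt g) by (apply sqrt_lt_R0, Hg).
  assert (Hvg : v0 <= v * sqrt g).
  { apply Rmult_le_compat_r with (r := sqrt g) in Hv0; [| lra].
    unfold Rdiv in Hv0; rewrite Rmult_assoc, Rinv_l in Hv0 by lra; lra. }
  assert (Hv : 0 < v) by (assert (0 < v0) by (unfold v0; apply Rdiv_lt_0_compat; lra); nra).
  pose proof (Cmod_Dz_ge y u v hy0 hy1 Hv ltac:(lra)) as Hmod; fold g in Hmod.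
  pose proof (le_sqrt_self y ltac:(lra)) as Hys.
  assert (HgM : g <= Rmax g v) by apply Rmax_l.
  split.
  - nra.
  - assert (Hroot : sqrt y * sqrt g <= sqrt (Cmod (Dz y (u, v)))).
    { rewrite <- sqrt_mult by lra; apply sqrt_le_1_alt; nra. }
    apply Rle_trans with (INR n * v * (sqrt y * sqrt g)).
    + assert (A0 <= INR n * (v * sqrt g)) by (rewrite <- Hnv0; nra).
      assert (0 <= sqrt y) by apply sqrt_pos.
      nra.
    + apply Rmult_le_compat_l; [nra | exact Hroot].
Qed.
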